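(* Let $\Gamma$ be a tetravalent (simple) graph admitting a subgroup $G \leq \mathrm{Aut}(\Gamma)$ acting regularly on the set of arcs of $\Gamma$. Then $\Gamma$ has exactly three $G$-orbits of $G$-consistent cycles, all of which are $G$-symmetric, if and only if the vertex stabilizers in $G$ are isomorphic to the Klein $4$-group $\mathbb{Z}_2\times\mathbb{Z}_2$.
   Context: An arc of a graph is an ordered pair of adjacent vertices. For an arc-transitive group $G$ of automorphisms of $\Gamma$, a directed cycle $\vec C=(v_0,v_1,\ldots,v_{r-1})$ (a connected $2$-valent subgraph with one of its two orientations) is $G$-consistent if some $g\in G$ maps each $v_i$ to $v_{i+1}$ (indices mod $r$); such $g$ is a shunt. An undirected cycle is $G$-consistent if its two orientations are $G$-consistent. A $G$-consistent cycle is $G$-symmetric if some element of $G$ maps $\vec C$ to its reverse $(v_0,v_{r-1},\ldots,v_1)$, and $G$-chiral otherwise. $G$ acts naturally on the set of $G$-consistent cycles. *)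

From HB Require Import structures.
From mathcomp Require Import all_boot all_fingroup all_algebra.
From mathcomp Require Import gproduct.
Set Implicit Arguments. Unset Strict Implicit. Unset Printing Implicit Defensive.

(* Finite simple graphs: a symmetric irreflexive relation e on a finType T.
   A directed cycle (v_0,...,v_{r-1}) is represented by a sequence s of
   pairwise distinct vertices, r >= 3, with e v_i v_{i+1} (indices mod r);
   as an object (i.e. up to rotation of the starting point) it is
   identified with its set of arcs {(v_i, v_{i+1})}. *)

Section Cycles.
Variables (T : finType) (e : rel T).

Definition cycle_seq (s : seq T) : bool := [&& 2 < size s, uniq s & path.cycle e s].

Definition arcs_of (s : seq T) : {set T * T} := [set (x, next s x) | x in s].

Definition dcycle (D : {set T * T}) : Prop :=
  exists s, cycle_seq s /\ D = arcs_of s.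

Definition rev_arcs (D : {set T * T}) : {set T * T} := [set (a.2, a.1) | a in D].

Definition undirect (D : {set T * T}) : {set {set T}} := [set [set a.1; a.2] | a in D].

Definition ucycle (U : {set {set T}}) : Prop :=
  exists D, dcycle D /\ U = undirect D.

Definition act_arcs (g : {perm T}) (D : {set T * T}) : {set T * T} :=
  [set (g a.1, g a.2) | a in D].
Definition act_edges (g : {perm T}) (U : {set {set T}}) : {set {set T}} :=
  [set g @: x | x : {set T} in U].

Variable G : {group {perm T}}.

Definition dconsistent (D : {set T * T}) : Prop :=
  dcycle D /\ exists2 g, g \in G & forall a, a \in D -> g a.1 = a.2.

Definition uconsistent (U : {set {set T}}) : Prop :=
  ucycle U /\ forall D, dcycle D -> undirect D = U -> dconsistent D.

Definition usymmetric (U : {set {set T}}) : Prop :=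
  forall D, dcycle D -> undirect D = U ->
    exists2 g, g \in G & act_arcs g D = rev_arcs D.

Definition same_orbit (U V : {set {set T}}) : Prop :=
  exists2 g, g \in G & act_edges g U = V.

End Cycles.

From HB Require Import structures.
From mathcomp Require Import all_boot all_fingroup all_algebra.
From mathcomp Require Import gproduct abelian.
Set Implicit Arguments. Unset Strict Implicit. Unset Printing Implicit Defensive.

(* Arc-regularity makes a G-consistent directed cycle the arc set of the
   orbit of its shunt g, and up to G it passes through a fixed arc (u, v)
   with g u = v; such a shunt is determined by the neighbour g v <> u of v,
   so there are valency - 1 = 3 of them, giving three G-orbits of oriented
   consistent cycles.  If t in G reverses the arc (u, v), the cycle of g is
   reversed by some element of G iff t inverts g, iff g^-1 t is an involution;
   and g^-1 t runs over all non-trivial elements of the stabiliser G_v.  Hence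
   all consistent cycles are symmetric iff G_v, a group of order 4, has
   exponent 2, i.e. is a Klein group; and then both orientations of a cycle
   lie in one orbit, so there are exactly three orbits of undirected ones. *)

Lemma set2_inj (T : finType) (x y x' y' : T) : [set x; y] = [set x'; y'] ->
  (x = x' /\ y = y') \/ (x = y' /\ y = x').
Proof.
move=> E.
have : x' \in [set x; y] by rewrite E set21.
have : y' \in [set x; y] by rewrite E set22.
have : y \in [set x'; y'] by rewrite -E set22.
have : x \in [set x'; y'] by rewrite -E set21.
rewrite !inE; by do 4!case/orP=> /eqP ?; subst; auto.
Qed.

Lemma cards3_set3 (T : finType) (A : {set T}) : #|A| = 3 ->
  exists x y z, [/\ x != y, x != z, y != z & A = [set x; y; z]].
Proof.
move=> A3; have [x xA] : exists x, x \in A by apply/card_gt0P; rewrite A3.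
have /cards2P [y [z [yz Ax]]] : #|A :\ x| == 2.
  by move: A3; rewrite (cardsD1 x) xA add1n => -[->].
have : y \in A :\ x /\ z \in A :\ x by rewrite Ax !inE !eqxx orbT.
rewrite !inE => -[/andP [yx _] /andP [zx _]].
exists x, y, z; split; rewrite // 1?eq_sym //.
by rewrite -[LHS](setD1K xA) Ax setUA.
Qed.

Local Open Scope group_scope.

Lemma invg_mul_involution_expg2 (gT : finGroupType) (x t : gT) : t * t = 1 ->
  (x^-1 * t) ^+ 2 = 1 <-> x ^ t = x^-1.
Proof.
move=> tt; have tV : t^-1 = t by rewrite -[LHS]mulg1 -tt mulKg.
have conjE : x ^ t = x^-1 <-> t * x^-1 * t = x.
  have invE : (t * (x * t))^-1 = t * x^-1 * t by rewrite !invMg tV.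
  rewrite conjgE tV -invE; split=> [-> | h]; first exact: invgK.
  by apply: invg_inj; rewrite h invgK.
rewrite expg2; split=> [h | /conjE h].
  by apply/conjE/(mulgI x^-1); rewrite mulVg -h !mulgA.
by rewrite -mulgA [t * _]mulgA h mulVg.
Qed.

Lemma klein_abelem : 2.-abelem [set: 'I_2 * 'I_2].
Proof.
by apply/exponent2_abelem/exponentP => -[[[|[|//]] ?] [[|[|//]] ?]] _; apply/eqP.
Qed.

Lemma isog_klein (gT : finGroupType) (S : {group gT}) :
  (S \isog [set: 'I_2 * 'I_2]) = 2.-abelem S && (#|S| == 4).
Proof. by rewrite isog_sym (isog_abelem_card _ klein_abelem) cardsT card_prod card_ord. Qed.

Section DirectedCycles.
Variables (T : finType) (e : rel T).
Implicit Types (g h : {perm T}) (D : {set T * T}).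

Lemma arcs_ofE (s : seq T) (a : T * T) :
  (a \in arcs_of s) = (a.1 \in s) && (a.2 == next s a.1).
Proof.
apply/imsetP/andP => [[x xs ->] | [h1 /eqP h2]] /=; first by rewrite xs eqxx.
by exists a.1 => //; rewrite -h2; case: a {h1 h2}.
Qed.

Lemma rev_arcsE D a : (a \in rev_arcs D) = ((a.2, a.1) \in D).
Proof.
apply/imsetP/idP => [[b bD ->] | aD] /=; first by case: b bD.
by exists (a.2, a.1) => //; case: a aD.
Qed.

Lemma act_arcsE h D a : (a \in act_arcs h D) = ((h^-1 a.1, h^-1 a.2) \in D).
Proof.
apply/imsetP/idP => [[b bD ->] | aD] /=; first by rewrite !permK; case: b bD.
by exists (h^-1 a.1, h^-1 a.2) => //=; rewrite !permKV; case: a aD.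
Qed.

Lemma act_arcs1 D : act_arcs 1 D = D.
Proof. by apply/setP => a; rewrite act_arcsE invg1 !perm1; case: a. Qed.

Lemma act_arcsM h1 h2 D : act_arcs (h1 * h2) D = act_arcs h2 (act_arcs h1 D).
Proof. by apply/setP => a; rewrite !act_arcsE /= invMg !permM. Qed.

Lemma act_rev_arcs h D : act_arcs h (rev_arcs D) = rev_arcs (act_arcs h D).
Proof. by apply/setP => a; rewrite act_arcsE !rev_arcsE act_arcsE. Qed.

Lemma act_arcs_rev_conj h r D C : act_arcs h D = C ->
  act_arcs r C = rev_arcs C -> act_arcs (h * r * h^-1) D = rev_arcs D.
Proof.
move=> hD rC; rewrite !act_arcsM hD rC -hD act_rev_arcs -act_arcsM mulgV.
by rewrite act_arcs1.
Qed.

Lemma undirect_rev_arcs D : undirect (rev_arcs D) = undirect D.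
Proof. by rewrite /undirect -imset_comp; apply: eq_imset => a /=; apply: setUC. Qed.

Lemma act_edges_undirect h D : act_edges h (undirect D) = undirect (act_arcs h D).
Proof.
rewrite /act_edges /undirect /act_arcs -!imset_comp.
by apply: eq_imset => a /=; rewrite imsetU1 imset_set1.
Qed.

Lemma mem_undirect D a : a \in D -> [set a.1; a.2] \in undirect D.
Proof. exact: imset_f. Qed.

Lemma dcycle_edge D a : dcycle e D -> a \in D -> e a.1 a.2.
Proof.
move=> [s [/and3P [_ _ cs] ->]]; rewrite arcs_ofE => /andP [a1s /eqP ->].
exact: next_cycle cs a1s.
Qed.

Lemma dcycle_arc_exists D : dcycle e D -> exists a, a \in D.
Proof.
move=> [[|x s] [/and3P [s3 _ _] ->]] //.
by exists (x, next (x :: s) x); rewrite arcs_ofE /= mem_head eqxx.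
Qed.

Lemma dcycle_succ D x y : dcycle e D -> (x, y) \in D -> exists z, (y, z) \in D.
Proof.
move=> [s [_ ->]]; rewrite arcs_ofE /= => /andP [xs /eqP ->].
by exists (next s (next s x)); rewrite arcs_ofE /= mem_next xs eqxx.
Qed.

Lemma dcycle_succ_uniq D x y y' : dcycle e D -> (x, y) \in D -> (x, y') \in D -> y = y'.
Proof.
by move=> [s [_ ->]]; rewrite !arcs_ofE /= => /andP [_ /eqP ->] /andP [_ /eqP ->].
Qed.

(* This is where the length of a cycle being at least 3 is used. *)
Lemma dcycle_asym D x y : dcycle e D -> (x, y) \in D -> (y, x) \notin D.
Proof.
move=> [s [/and3P [s3 us _] ->]]; rewrite !arcs_ofE /= => /andP [xs /eqP ->].
apply/negP => /andP [_ /eqP].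
have [i p def] := rot_to xs.
rewrite -!(next_rot i us) def.
have : 2 < size (x :: p) by rewrite -def size_rot.
have : uniq (x :: p) by rewrite -def rot_uniq.
case: p {def} => [|y' [|z r]] //= /and3P [].
rewrite !inE !negb_or => /and3P [xy' xz _] /andP [y'z _] _ _.
rewrite eqxx eq_sym (negbTE xy') eqxx => zx.
by move: xz; rewrite zx eqxx.
Qed.

End DirectedCycles.

Section PermOrbitArcs.
Variables (T : finType) (e : rel T).
Hypothesis e_irr : irreflexive e.
Implicit Types (g h : {perm T}) (D : {set T * T}).

Lemma fconnect_porbit g x y : fconnect g x y = (y \in porbit g x).
Proof.
apply/idP/porbitP => [| [i ->]]; last by rewrite permX fconnect_iter.
by rewrite fconnect_orbit => /trajectP [i _ ->]; exists i; rewrite permX.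
Qed.

Lemma porbit_permE g x y : (g y \in porbit g x) = (y \in porbit g x).
Proof. by rewrite porbit_sym -[g y]/((g ^+ 1) y) porbit_perm porbit_sym. Qed.

Definition porbit_arcs g x : {set T * T} :=
  [set a | (a.1 \in porbit g x) && (a.2 == g a.1)].

Lemma porbit_arcsE g x a :
  (a \in porbit_arcs g x) = (a.1 \in porbit g x) && (a.2 == g a.1).
Proof. by rewrite inE. Qed.

Lemma porbit_arcs_id g x : (x, g x) \in porbit_arcs g x.
Proof. by rewrite porbit_arcsE porbit_id eqxx. Qed.

Lemma porbit_arcs_shunt g x a : a \in porbit_arcs g x -> g a.1 = a.2.
Proof. by rewrite porbit_arcsE => /andP [_ /eqP ->]. Qed.

Lemma porbit_arcs_porbit g x y : y \in porbit g x -> porbit_arcs g y = porbit_arcs g x.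
Proof. by rewrite -eq_porbit_mem => /eqP E; rewrite /porbit_arcs E. Qed.

Lemma rev_porbit_arcs g x : rev_arcs (porbit_arcs g x) = porbit_arcs g^-1 x.
Proof.
apply/setP => -[y z]; rewrite rev_arcsE !porbit_arcsE /= porbitV.
apply/andP/andP => [[yx /eqP ->] | [yx /eqP ->]]; rewrite ?permK ?permKV ?porbit_permE //.
by rewrite -porbit_permE permKV.
Qed.

Lemma act_porbit_arcs g h x : act_arcs h (porbit_arcs g x) = porbit_arcs (g ^ h) (h x).
Proof.
have porbitJ y : (y \in porbit (g ^ h) (h x)) = (h^-1 y \in porbit g x).
  apply/porbitP/porbitP => [[i ->] | [i hi]]; exists i.
    by rewrite -conjXg permJ permK.
  by rewrite -conjXg permJ -hi permKV.
have gJ y : (g ^ h) y = h (g (h^-1 y)) by rewrite -permJ permKV.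
apply/setP => -[y z]; rewrite act_arcsE !porbit_arcsE /= porbitJ gJ.
by rewrite (can2_eq (permKV h) (permK h)).
Qed.

Lemma dcycle_porbit_arcsE D g a : dcycle e D -> {in D, forall b, g b.1 = b.2} ->
  a \in D -> D = porbit_arcs g a.1.
Proof.
move=> [s [/and3P [_ us cs] ->]] gD; rewrite arcs_ofE => /andP [a1s _].
have next_g : {in s, forall y, next s y = g y}.
  by move=> y ys; rewrite (gD (y, next s y)) // arcs_ofE ys eqxx.
have gs : fcycle g s.
  by apply: (sub_in_cycle _ (allss s) (cycle_next us)) => y z ys _ /=; rewrite next_g.
apply/setP => b; rewrite arcs_ofE porbit_arcsE -fconnect_porbit (fconnect_cycle gs a1s).
by case b1s: (b.1 \in s); rewrite //= next_g.
Qed.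

Lemma porbit_arcs_dcycle g x : {in porbit g x, forall y, e y (g y)} ->
  g (g x) != x -> dcycle e (porbit_arcs g x).
Proof.
move=> ge ggx; set s := fingraph.orbit g x.
have gs : fcycle g s by apply/cycle_orbit/perm_inj.
have sE y : (y \in s) = (y \in porbit g x) by rewrite -fconnect_orbit fconnect_porbit.
have gx : g x != x by apply: contraTneq (ge x (porbit_id g x)) => ->; rewrite e_irr.
exists s; split.
  apply/and3P; split; last 2 first.
  - exact: orbit_uniq.
  - by apply: (sub_in_cycle _ (allss s) gs) => y z ys _ /= /eqP <-; rewrite ge -?sE.
  rewrite size_orbit; have := iter_order (@perm_inj _ g) x.
  case: (fingraph.order g x) (fingraph.order_gt0 g x) => [|[|[|n]]] //= _ /eqP.
    by rewrite (negbTE gx).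
  by rewrite (negbTE ggx).
apply/setP => a; rewrite arcs_ofE porbit_arcsE sE.
by case a1x: (a.1 \in porbit g x); rewrite //= -(eqP (next_cycle gs _)) ?sE.
Qed.

Lemma undirect_porbit_arcsP g x y z : [set y; z] \in undirect (porbit_arcs g x) ->
  (y \in porbit g x /\ z = g y) \/ (z \in porbit g x /\ y = g z).
Proof.
case/imsetP => b; rewrite porbit_arcsE => /andP [b1x /eqP b2] /set2_inj.
by case=> [[-> ->] | [-> ->]]; [left | right].
Qed.

Section Orientation.
Variables (g : {perm T}) (x : T) (D : {set T * T}).
Hypotheses (dD : dcycle e D) (DgE : undirect D = undirect (porbit_arcs g x)).

Lemma dcycle_shunt_step y : (y, g y) \in D -> (g y, g (g y)) \in D.
Proof.
move=> yD; have [z gyzD] := dcycle_succ dD yD.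
have := mem_undirect gyzD; rewrite /= DgE => /undirect_porbit_arcsP [[_ <-] // | [_ gyz]].
by rewrite -(perm_inj gyz) (negbTE (dcycle_asym dD yD)) in gyzD.
Qed.

Lemma dcycle_eq_porbit_arcs y : y \in porbit g x -> (y, g y) \in D ->
  D = porbit_arcs g x.
Proof.
move=> yx yD; have gxD : porbit_arcs g x \subset D.
  have Ey : porbit g y = porbit g x by apply/eqP; rewrite eq_porbit_mem.
  apply/subsetP => -[z w]; rewrite porbit_arcsE -Ey /= => /andP [/porbitP [i ->] /eqP ->].
  elim: i => [|i IH]; first by rewrite expg0 perm1.
  by rewrite expgSr permM; apply: dcycle_shunt_step.
apply/eqP; rewrite eqEsubset gxD andbT; apply/subsetP => a aD.
have a1x : a.1 \in porbit g x.
  have := mem_undirect aD; rewrite DgE => /undirect_porbit_arcsP [[] | [a2x ->]] //.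
  by rewrite porbit_permE.
have a1gD : (a.1, g a.1) \in D by apply: (subsetP gxD); rewrite porbit_arcsE a1x eqxx.
have aD' : (a.1, a.2) \in D by rewrite -surjective_pairing.
by rewrite porbit_arcsE a1x (dcycle_succ_uniq dD aD' a1gD) eqxx.
Qed.

End Orientation.

Lemma dcycle_orientations g x D : dcycle e D ->
  undirect D = undirect (porbit_arcs g x) ->
  D = porbit_arcs g x \/ D = porbit_arcs g^-1 x.
Proof.
move=> dD DgE; have [a aD] := dcycle_arc_exists dD.
have aD' : (a.1, a.2) \in D by rewrite -surjective_pairing.
have := mem_undirect aD; rewrite DgE => /undirect_porbit_arcsP [[a1x a2E] | [a2x a1E]].
  by left; apply: (dcycle_eq_porbit_arcs dD DgE a1x); rewrite -a2E.
have a1x : a.1 \in porbit g^-1 x by rewrite porbitV a1E porbit_permE.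
right; apply: (dcycle_eq_porbit_arcs dD _ a1x).
  by rewrite -rev_porbit_arcs undirect_rev_arcs.
by rewrite a1E permK -a1E.
Qed.

End PermOrbitArcs.

Section ArcRegular.
Variables (T : finType) (e : rel T) (G : {group {perm T}}).
Hypotheses (e_sym : symmetric e) (e_irr : irreflexive e)
  (G_aut : forall g, g \in G -> forall x y, e (g x) (g y) = e x y)
  (G_arc_regular : forall x y x' y', e x y -> e x' y' ->
      exists! g, g \in G /\ g x = x' /\ g y = y').
Implicit Types (g h : {perm T}) (D : {set T * T}).

Lemma arc_regular_ex x y x' y' : e x y -> e x' y' ->
  exists2 g, g \in G & g x = x' /\ g y = y'.
Proof. by move=> xy x'y'; have [g [[gG gxy] _]] := G_arc_regular xy x'y'; exists g. Qed.

Lemma arc_regular_inj g1 g2 x y : g1 \in G -> g2 \in G -> e x y ->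
  g1 x = g2 x -> g1 y = g2 y -> g1 = g2.
Proof.
move=> g1G g2G xy g12x g12y; have g1xy : e (g1 x) (g1 y) by rewrite G_aut.
have [g [_ gU]] := G_arc_regular xy g1xy.
by rewrite -(gU g1) ?(gU g2) ?g12x ?g12y.
Qed.

Lemma arc_stabilizer_trivial h x y : h \in G -> e x y -> h x = x -> h y = y -> h = 1.
Proof. by move=> hG xy hx hy; apply: (arc_regular_inj hG (group1 G) xy); rewrite perm1. Qed.

Lemma arc_reversal_involutive t x y : t \in G -> e x y -> t x = y -> t y = x -> t * t = 1.
Proof.
move=> tG xy tx ty.
by apply: (arc_stabilizer_trivial _ xy); rewrite ?groupM ?permM ?tx ?ty.
Qed.

Lemma in_vertex_stabilizer v k : (k \in 'C_G[v | 'P]) = (k \in G) && (k v == v).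
Proof. by rewrite !inE sub1set inE. Qed.

Lemma card_arc_transporters x y x' (A : {set T}) : e x y ->
  #|[set g in G | (g x == x') && (g y \in A)]| = #|[set w in A | e x' w]|.
Proof.
move=> xy; rewrite -(@card_in_imset _ _ (fun g : {perm T} => g y)).
  apply: eq_card => w; rewrite inE; apply/imsetP/andP => [[g] | [wA x'w]].
    by rewrite inE => /and3P [gG /eqP gx gyA] ->; rewrite -gx G_aut.
  have [g gG [gx gy]] := arc_regular_ex xy x'w.
  by exists g; rewrite // inE gG gx gy eqxx.
move=> g1 g2; rewrite !inE => /and3P [g1G /eqP g1x _] /and3P [g2G /eqP g2x _].
by apply: (arc_regular_inj g1G g2G xy); rewrite g1x g2x.
Qed.

Lemma card_vertex_stabilizer v u : e v u -> #|'C_G[v | 'P]| = #|[set w | e v w]|.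
Proof.
move=> vu; have -> : 'C_G[v | 'P] = [set g in G | (g v == v) && (g u \in setT)].
  by apply/setP => k; rewrite in_vertex_stabilizer !inE andbT.
by rewrite card_arc_transporters //; apply: eq_card => w; rewrite !inE.
Qed.

Lemma shunt_porbit_edge g x : g \in G -> e x (g x) -> {in porbit g x, forall y, e y (g y)}.
Proof.
move=> gG xgx _ /porbitP [i ->].
by rewrite -permM -expgSr expgS permM G_aut ?groupX.
Qed.

Lemma shunt_dcycle g x : g \in G -> e x (g x) -> g (g x) != x -> dcycle e (porbit_arcs g x).
Proof. by move=> gG xgx; apply/porbit_arcs_dcycle/shunt_porbit_edge. Qed.

Lemma shunt_dconsistent g x : g \in G -> e x (g x) -> g (g x) != x ->
  dconsistent e G (porbit_arcs g x).
Proof.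
move=> gG xgx ggx; split; first exact: shunt_dcycle.
by exists g => // a /porbit_arcs_shunt.
Qed.

Lemma shunt_uconsistent g x : g \in G -> e x (g x) -> g (g x) != x ->
  uconsistent e G (undirect (porbit_arcs g x)).
Proof.
move=> gG xgx ggx; split.
  by exists (porbit_arcs g x); split; first exact: shunt_dcycle.
move=> D dD DgE; have [-> | ->] := dcycle_orientations dD DgE.
  exact: shunt_dconsistent.
apply: shunt_dconsistent; rewrite ?groupV //; first by rewrite -(G_aut gG) permKV e_sym.
by apply: contra ggx => /eqP {1}<-; rewrite !permKV.
Qed.

Lemma act_porbit_arcs_conjg g g' h u u' : g \in G -> g' \in G -> h \in G ->
  e u' (g' u') -> act_arcs h (porbit_arcs g u) = porbit_arcs g' u' ->
  exists2 k, k \in G & k u = u' /\ g ^ k = g'.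
Proof.
move=> gG g'G hG u'g'u' E; rewrite act_porbit_arcs in E.
have : (u', g' u') \in porbit_arcs (g ^ h) (h u) by rewrite E porbit_arcs_id.
have : (g' u', g' (g' u')) \in porbit_arcs (g ^ h) (h u).
  by rewrite E porbit_arcsE porbit_permE porbit_id eqxx.
rewrite !porbit_arcsE /= => /andP [_ /eqP g'2u'E] /andP [u'x /eqP g'u'E].
have ghE : g ^ h = g' by apply: (arc_regular_inj _ g'G u'g'u'); rewrite ?groupJ.
rewrite ghE in u'x; have [i u'E] := porbitP _ _ _ u'x.
exists (h * g' ^+ i); first by rewrite groupM ?groupX.
split; first by rewrite permM u'E.
by rewrite conjgM ghE; apply/conjg_fixP/commgP/commuteX.
Qed.

Definition reversible D := exists2 r, r \in G & act_arcs r D = rev_arcs D.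

Lemma porbit_arcs_reversibleP g t u v : g \in G -> t \in G -> e u v ->
  g u = v -> t u = v -> t v = u -> reversible (porbit_arcs g u) <-> g ^ t = g^-1.
Proof.
move=> gG tG uv gu tu tv.
have vu' : v \in porbit g^-1 u by rewrite porbitV -gu porbit_permE porbit_id.
split=> [[r rG] | gtE]; last first.
  by exists t; rewrite // act_porbit_arcs gtE tu rev_porbit_arcs (porbit_arcs_porbit vu').
rewrite rev_porbit_arcs -(porbit_arcs_porbit vu') => rE.
have vgv : e v (g^-1 v) by rewrite -gu permK e_sym gu.
have [k kG [ku gkE]] := act_porbit_arcs_conjg gG (groupVr gG) rG vgv rE.
have kv : k v = u by rewrite -gu -permJ gkE ku -gu permK.
by rewrite -gkE (arc_regular_inj kG tG uv) ?ku ?kv ?tu ?tv.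
Qed.

Lemma vertex_stabilizer_exponent2 v u :
  (forall U, uconsistent e G U -> usymmetric e G U) -> e v u ->
  exponent 'C_G[v | 'P] %| 2.
Proof.
move=> symG vu; have uv : e u v by rewrite e_sym.
apply/exponentP => k; rewrite in_vertex_stabilizer => /andP [kG /eqP kv].
have [ku | kuNu] := eqVneq (k u) u.
  by rewrite (arc_stabilizer_trivial kG vu kv ku) expg1n.
set w := k^-1 u; have kw : k w = u := permKV k u.
have vw : e v w by rewrite -(G_aut kG) kv kw.
have [g gG [gu gv]] := arc_regular_ex uv vw.
have [t tG [tu tv]] := arc_regular_ex uv vu.
have kE : k = g^-1 * t.
  apply: (arc_regular_inj kG _ vw); first by rewrite groupM ?groupV.
    by rewrite kv permM -[in RHS]gu permK tu.
  by rewrite kw permM -[in RHS]gv permK tv.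
have ggu : g (g u) != u by rewrite gu gv; apply: contra kuNu => /eqP {1}<-; rewrite kw.
have xgx : e u (g u) by rewrite gu.
have := symG _ (shunt_uconsistent gG xgx ggu) _ (shunt_dcycle gG xgx ggu) erefl.
move/(porbit_arcs_reversibleP gG tG uv gu tu tv) => gtE.
rewrite kE; apply/invg_mul_involution_expg2 => //.
exact: arc_reversal_involutive tG uv tu tv.
Qed.

Section BaseArc.
Variables u v : T.
Hypothesis uv : e u v.

(* The shunts of the consistent cycles through the arc (u, v); the arc
   reversal, with g v = u, has an orbit of length 2. *)
Definition based_shunts := [set g in G | (g u == v) && (g v \in [set~ u])].

Lemma based_shuntsE g : (g \in based_shunts) = [&& g \in G, g u == v & g v != u].
Proof. by rewrite !inE. Qed.

Lemma card_based_shunts : #|based_shunts| = #|[set w | e v w]|.-1.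
Proof.
rewrite card_arc_transporters // (cardsD1 u [set w | e v w]) inE e_sym uv /=.
by apply: eq_card => w; rewrite !inE andbC.
Qed.

Lemma based_shunts_reversible : exponent 'C_G[v | 'P] %| 2 ->
  {in based_shunts, forall g, reversible (porbit_arcs g u)}.
Proof.
move=> /exponentP expG g; rewrite based_shuntsE => /and3P [gG /eqP gu _].
have vu : e v u by rewrite e_sym.
have [t tG [tu tv]] := arc_regular_ex uv vu.
apply/(porbit_arcs_reversibleP gG tG uv gu tu tv).
apply/invg_mul_involution_expg2; first exact: arc_reversal_involutive tG uv tu tv.
by apply: expG; rewrite in_vertex_stabilizer groupM ?groupV //= permM -{1}gu permK tu.
Qed.

Lemma based_shunt_uconsistent g : g \in based_shunts ->
  uconsistent e G (undirect (porbit_arcs g u)).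
Proof.
rewrite based_shuntsE => /and3P [gG /eqP gu gv].
by apply: shunt_uconsistent; rewrite ?gu.
Qed.

Lemma dconsistent_based D : dconsistent e G D ->
  exists2 h, h \in G & exists2 g, g \in based_shunts & act_arcs h D = porbit_arcs g u.
Proof.
move=> [dD [g gG gD]]; have [a aD] := dcycle_arc_exists dD.
have DE := dcycle_porbit_arcsE dD gD aD.
have [h hG [ha1 ha2]] := arc_regular_ex (dcycle_edge dD aD) uv.
exists h => //; exists (g ^ h); last by rewrite DE act_porbit_arcs ha1.
have gJ x : (g ^ h) (h x) = h (g x) := permJ g h x.
rewrite based_shuntsE groupJ //= -ha1 gJ gD // ha2 eqxx /= -ha2 gJ (inj_eq perm_inj).
have a2D : (a.2, g a.2) \in D.
  by rewrite DE porbit_arcsE -(gD a aD) porbit_permE porbit_id eqxx.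
by apply: contraTneq a2D => ->; rewrite (dcycle_asym dD) // -surjective_pairing.
Qed.

Lemma act_porbit_arcs_based_inj g g' h : g \in G -> g' \in G -> h \in G ->
  g u = v -> g' u = v ->
  act_arcs h (porbit_arcs g u) = porbit_arcs g' u -> g = g'.
Proof.
move=> gG g'G hG gu g'u E.
have ug'u : e u (g' u) by rewrite g'u.
have [k kG [ku gkE]] := act_porbit_arcs_conjg gG g'G hG ug'u E.
have kv : k v = v by rewrite -{1}gu -permJ gkE ku g'u.
by rewrite -gkE (arc_stabilizer_trivial kG uv ku kv) conjg1.
Qed.

Lemma same_orbit_based_shunts :
  {in based_shunts, forall g, reversible (porbit_arcs g u)} ->
  {in based_shunts &, forall g g',
    same_orbit G (undirect (porbit_arcs g u)) (undirect (porbit_arcs g' u)) -> g = g'}.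
Proof.
move=> revB g g' gB g'B; have [r rG rE] := revB g' g'B; move: gB g'B.
rewrite !based_shuntsE => /and3P [gG /eqP gu gv] /and3P [g'G /eqP g'u _] [h hG].
have hD : dcycle e (act_arcs h (porbit_arcs g u)).
  rewrite act_porbit_arcs; apply: shunt_dcycle; rewrite ?groupJ // !permJ ?G_aut ?gu //.
  by rewrite (inj_eq perm_inj).
rewrite act_edges_undirect => /(dcycle_orientations hD) [|hE].
  exact: act_porbit_arcs_based_inj.
have hrG : h * r^-1 \in G by rewrite groupM ?groupV.
apply: (act_porbit_arcs_based_inj gG g'G hrG) => //.
by rewrite act_arcsM hE -rev_porbit_arcs -rE -act_arcsM mulgV act_arcs1.
Qed.

Lemma uconsistent_based_orbit U : uconsistent e G U ->
  exists2 g, g \in based_shunts & same_orbit G U (undirect (porbit_arcs g u)).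
Proof.
move=> [[D [dD ->]] consU]; have [h hG [g gB hD]] := dconsistent_based (consU D dD erefl).
by exists g => //; exists h; rewrite // act_edges_undirect hD.
Qed.

Lemma uconsistent_usymmetric U :
  {in based_shunts, forall g, reversible (porbit_arcs g u)} ->
  uconsistent e G U -> usymmetric e G U.
Proof.
move=> revB [_ consU] D dD DU; have [h hG [g gB hD]] := dconsistent_based (consU D dD DU).
have [r rG rE] := revB g gB.
by exists (h * r * h^-1); [rewrite !groupM ?groupV | apply: act_arcs_rev_conj hD rE].
Qed.

Lemma consistent_orbits_of_exponent2 : exponent 'C_G[v | 'P] %| 2 ->
  [/\ {in based_shunts, forall g, uconsistent e G (undirect (porbit_arcs g u))},
      {in based_shunts &, forall g g',
        same_orbit G (undirect (porbit_arcs g u)) (undirect (porbit_arcs g' u)) -> g = g'},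
      forall U, uconsistent e G U ->
        exists2 g, g \in based_shunts & same_orbit G U (undirect (porbit_arcs g u))
    & forall U, uconsistent e G U -> usymmetric e G U].
Proof.
move/based_shunts_reversible => revB.
split; last by move=> U; apply: uconsistent_usymmetric.
- exact: based_shunt_uconsistent.
- exact: same_orbit_based_shunts.
- exact: uconsistent_based_orbit.
Qed.

End BaseArc.

End ArcRegular.

Local Close Scope group_scope.

Theorem lemma1p3 (T : finType) (e : rel T) (G : {group {perm T}})
  (v0 : T)
  (e_sym : symmetric e) (e_irr : irreflexive e)
  (tetravalent : forall v : T, #|[set w | e v w]| = 4)
  (G_aut : forall g, g \in G -> forall x y, e (g x) (g y) = e x y)
  (G_arc_regular : forall x y x' y', e x y -> e x' y' ->
      exists! g, g \in G /\ g x = x' /\ g y = y') :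
  ((exists U1 U2 U3 : {set {set T}},
      [/\ uconsistent e G U1, uconsistent e G U2 & uconsistent e G U3] /\
      [/\ ~ same_orbit G U1 U2, ~ same_orbit G U1 U3 & ~ same_orbit G U2 U3] /\
      forall U, uconsistent e G U ->
        [\/ same_orbit G U U1, same_orbit G U U2 | same_orbit G U U3])
   /\ (forall U, uconsistent e G U -> usymmetric e G U))
  <->
  (forall v : T, 'C_G[v | 'P] \isog [set: ('I_2 * 'I_2)%type]).
Proof.
have neighbour v : exists u, e v u.
  have /card_gt0P [u] : 0 < #|[set w | e v w]| by rewrite tetravalent.
  by rewrite inE; exists u.
split=> [[_ symG] v | klein].
  have [u vu] := neighbour v.
  rewrite isog_klein (card_vertex_stabilizer G_aut G_arc_regular vu) tetravalent eqxx andbT.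
  apply/exponent2_abelem.
  exact (vertex_stabilizer_exponent2 e_sym e_irr G_aut G_arc_regular symG vu).
have [u v0u] := neighbour v0; have uv0 : e u v0 by rewrite e_sym.
have exp2 : exponent 'C_G[v0 | 'P] %| 2.
  by have := klein v0; rewrite isog_klein abelemE // => /andP [/andP [_ ->]].
have [consB injB covB symB] :=
  consistent_orbits_of_exponent2 e_sym e_irr G_aut G_arc_regular uv0 exp2.
have /cards3_set3 [g1 [g2 [g3 [n12 n13 n23 BE]]]] : #|based_shunts G u v0| = 3.
  by rewrite (card_based_shunts e_sym G_aut G_arc_regular uv0) tetravalent.
have [g1B g2B g3B] : [/\ g1 \in based_shunts G u v0, g2 \in based_shunts G u v0
  & g3 \in based_shunts G u v0] by rewrite BE !inE !eqxx !orbT.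
split; last exact: symB.
exists (undirect (porbit_arcs g1 u)), (undirect (porbit_arcs g2 u)),
  (undirect (porbit_arcs g3 u)).
split; first by split; apply: consB.
split.
  split=> [/(injB _ _ g1B g2B) | /(injB _ _ g1B g3B) | /(injB _ _ g2B g3B)] /eqP;
  by [apply/negP: n12 | apply/negP: n13 | apply/negP: n23].
move=> U /covB [g]; rewrite BE !inE => /orP [/orP [] | ] /eqP ->.
all: by [constructor 1 | constructor 2 | constructor 3].
Qed.
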